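(* Let $m\ge5$ be odd, $h=\frac{m-1}{2}$, $A=\{1,2,\dots,2^{h-1}-1\}$. For any $i\in A$ and $j\in\Gamma_{(h)}$: (i) $C_{i+2^h}\cap C_{j+2^{h+1}}\neq\emptyset$ only if $(i,j)=(1,1)$; moreover $C_j\cap C_{j+2^{h+1}}=\emptyset$. (ii) $$C_{i+2^h}\cap C_j=\begin{cases}C_j,&\text{if }(i,j)=(2^s i_1,\ i_1+2^{h-s})\text{ for some } i_1\in\Gamma_{(h-1-s)}\text{ and } s\in\{1,2,\dots,h-2\},\\ \emptyset,&\text{otherwise.}\end{cases}$$
   Context: Let $v=2^m-1$. For an integer $i$, $C_i=\{i\cdot 2^s \bmod v: s\ge 0\}$ is the $2$-cyclotomic coset of $i$ modulo $v$. For a positive integer $t$, $\Gamma_{(t)}=\{j:1\le j\le 2^t-1,\ j\text{ odd}\}$. *)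

From mathcomp Require Import all_boot.
Set Implicit Arguments. Unset Strict Implicit. Unset Printing Implicit Defensive.

Definition cyc_v (m : nat) : nat := 2 ^ m - 1.

Definition cyc_coset (m i : nat) : nat -> Prop :=
  fun x => exists s : nat, x = (i * 2 ^ s) %% cyc_v m.

Definition Gamma (t j : nat) : bool := [&& odd j, 1 <= j & j <= 2 ^ t - 1].

Definition cosets_meet (m a b : nat) : Prop :=
  exists x, cyc_coset m a x /\ cyc_coset m b x.

Definition cosets_disjoint (m a b : nat) : Prop :=
  forall x, ~ (cyc_coset m a x /\ cyc_coset m b x).

Definition cap_eq_right (m a b : nat) : Prop :=
  forall x, (cyc_coset m a x /\ cyc_coset m b x) <-> cyc_coset m b x.

From mathcomp Require Import all_boot zify.

Set Implicit Arguments.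
Unset Strict Implicit.
Unset Printing Implicit Defensive.

(* Modulo [2^m - 1] we have [2^m = 1], so multiplying by [2] rotates the
   [m]-bit expansion of a residue cyclically, and two cosets meet exactly when
   a representative of one is a rotation of a representative of the other.
   The representatives [i + 2^h], [j] and [j + 2^(h+1)] have at most [h + 2]
   bits while [m = 2h + 1], so a rotation by [e] either shifts without
   wrapping around (then size and parity rule out coincidences), or moves a
   nonzero bit to position [>= e] (then the result is too large), or
   consists only of wrapped-around bits, which is a division by [2^(m-e)];
   the last case at [e = h + 1] gives [(i, j) = (1, 1)], and in part (ii) it
   is exactly the case [(i, j) = (2^s i1, i1 + 2^(h-s))]. *)

Lemma exp2_cyc_v m : 2 ^ m = cyc_v m + 1.
Proof. by rewrite /cyc_v subnK // expn_gt0. Qed.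

Lemma exp2_mulm_mod m k : 2 ^ (m * k) = 1 %[mod cyc_v m].
Proof. by rewrite expnM -modnXm exp2_cyc_v modnDl modnXm exp1n. Qed.

Lemma exp2_mod_inv m t : 0 < m -> 2 ^ t * 2 ^ (m * t - t) = 1 %[mod cyc_v m].
Proof. by move=> m_gt0; rewrite -expnD subnKC ?leq_pmull // exp2_mulm_mod. Qed.

Lemma mul_exp2_mod m a n : 0 < m -> a * 2 ^ n = a * 2 ^ (n %% m) %[mod cyc_v m].
Proof.
move=> m_gt0; rewrite {1}(divn_eq n m) expnD mulnC (mulnC (n %/ m)) -mulnA.
by rewrite -modnMml exp2_mulm_mod modnMml mul1n mulnC.
Qed.

Lemma cyc_coset_mul_exp2 m b s x :
  0 < m -> cyc_coset m b x -> cyc_coset m (b * 2 ^ s) x.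
Proof.
move=> m_gt0 [t ->]; exists (t + (m * s - s)).
rewrite expnD mulnCA !mulnA -mulnA -[RHS]modnMmr exp2_mod_inv //.
by rewrite modnMmr muln1 mulnC.
Qed.

Lemma cap_eq_right_mul_exp2 m a b s :
  0 < m -> a = b * 2 ^ s -> cap_eq_right m a b.
Proof.
move=> m_gt0 -> x; split=> [[] // | xb]; split=> //.
exact: cyc_coset_mul_exp2.
Qed.

Lemma cosets_meet_rot m a b : 0 < m -> b < cyc_v m -> cosets_meet m a b ->
  exists2 e, e < m & b = (a * 2 ^ e) %% cyc_v m.
Proof.
move=> m_gt0 b_lt [x [[s xa] [t xb]]].
exists ((s + (m * t - t)) %% m); first by rewrite ltn_mod.
rewrite -mul_exp2_mod // expnD mulnA -modnMml -xa xb modnMml -mulnA.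
by rewrite -modnMmr exp2_mod_inv // modnMmr muln1 modn_small.
Qed.

Section Rotation.

Variables m a e : nat.
Hypotheses (a_lt : a < cyc_v m) (e_lt : e < m).

Lemma rot_exp2_modE :
  (a * 2 ^ e) %% cyc_v m = a %% 2 ^ (m - e) * 2 ^ e + a %/ 2 ^ (m - e).
Proof.
have split_m : 2 ^ m = 2 ^ (m - e) * 2 ^ e by rewrite -expnD subnK // ltnW.
have P_gt0 : 0 < 2 ^ (m - e) by rewrite expn_gt0.
have Q_gt0 : 0 < 2 ^ e by rewrite expn_gt0.
have := a_lt; rewrite /cyc_v split_m.
move: P_gt0 Q_gt0; set P := 2 ^ (m - e); set Q := 2 ^ e => P_gt0 Q_gt0 a_lt'.
have a_eq := divn_eq a P; set hi := a %/ P in a_eq *; set lo := a %% P in a_eq *.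
have lo_lt : lo < P by rewrite ltn_mod.
have hi_lt : hi < Q by rewrite ltn_divLR // mulnC; lia.
have -> : a * Q = hi * (P * Q - 1) + (hi + lo * Q) by rewrite a_eq; nia.
rewrite modnMDl modn_small; first by rewrite addnC.
have [lo_small | lo_big] := ltnP lo (P - 1).
  have : lo * Q <= (P - 2) * Q by rewrite leq_mul2r; apply/orP; right; lia.
  nia.
have : hi * P < (Q - 1) * P by nia.
rewrite ltn_pmul2r // => hi_lt'.
have : lo * Q <= (P - 1) * Q by rewrite leq_mul2r; apply/orP; right; lia.
nia.
Qed.

Lemma rot_exp2_mod_small : a < 2 ^ (m - e) -> (a * 2 ^ e) %% cyc_v m = a * 2 ^ e.
Proof. by move=> a_small; rewrite rot_exp2_modE modn_small // divn_small ?addn0. Qed.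

Lemma rot_exp2_mod_dvd :
  2 ^ (m - e) %| a -> (a * 2 ^ e) %% cyc_v m = a %/ 2 ^ (m - e).
Proof. by move=> /eqP a_dvd; rewrite rot_exp2_modE a_dvd. Qed.

Lemma rot_exp2_mod_ndvd :
  ~~ (2 ^ (m - e) %| a) -> 2 ^ e <= (a * 2 ^ e) %% cyc_v m.
Proof.
rewrite /dvdn -lt0n rot_exp2_modE => lo_gt0.
by apply: leq_trans (leq_addr _ _); rewrite leq_pmull.
Qed.

Lemma rot_exp2_mod_le_or_ge :
  (a * 2 ^ e) %% cyc_v m <= a \/ 2 ^ e <= (a * 2 ^ e) %% cyc_v m.
Proof.
have [a_dvd | a_ndvd] := boolP (2 ^ (m - e) %| a).
  by left; rewrite rot_exp2_mod_dvd // leq_div.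
by right; apply: rot_exp2_mod_ndvd.
Qed.

End Rotation.

Definition shift_pair (h i j : nat) : Prop :=
  exists s i1, [/\ 1 <= s <= h - 2, Gamma (h - 1 - s) i1,
                   i = 2 ^ s * i1 & j = i1 + 2 ^ (h - s)].

Section ShiftedCosets.

Variables m h : nat.
Hypotheses (m_def : m = 2 * h + 1) (h_ge2 : 2 <= h).

Lemma m_gt0 : 0 < m.
Proof. by rewrite m_def addn1. Qed.

Lemma exp2_half : 2 * 2 ^ (h - 1) = 2 ^ h.
Proof. by rewrite -expnS subn1 prednK // ltnW. Qed.

Lemma exp2S2_lt_cyc_v : 2 ^ h.+2 < cyc_v m.
Proof.
have : 2 ^ h.+3 <= 2 ^ m by rewrite leq_exp2l // m_def; lia.
rewrite (exp2_cyc_v m) !expnS; have := expn_gt0 2 h; lia.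
Qed.

Variables i j : nat.

Lemma cap_eq_right_shift : shift_pair h i j -> cap_eq_right m (i + 2 ^ h) j.
Proof.
case=> s [i1 [/andP[_ s_le] _ -> ->]].
apply: (cap_eq_right_mul_exp2 (s := s) m_gt0).
by rewrite mulnDl -expnD subnK ?(mulnC i1) //; lia.
Qed.

Hypotheses (j_odd : odd j) (j_lt : j < 2 ^ h).

Lemma cosets_disjoint_shiftS : cosets_disjoint m j (j + 2 ^ h.+1).
Proof.
move=> x xab; have v_gt := exp2S2_lt_cyc_v.
have a_lt : j < cyc_v m by rewrite !expnS in v_gt *; lia.
have b_lt : j + 2 ^ h.+1 < cyc_v m by rewrite !expnS in v_gt *; lia.
have [e e_lt j_eq] := cosets_meet_rot m_gt0 b_lt (ex_intro _ x xab).
have [e_le | e_gt] := leqP e h.+1.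
  move: j_eq; rewrite rot_exp2_mod_small //; last first.
    by apply: leq_trans j_lt _; rewrite leq_exp2l // m_def; lia.
  case: e {e_lt e_le} => [|e]; first by rewrite muln1; have := expn_gt0 2 h.+1; lia.
  by move/(congr1 odd); rewrite oddD oddM !oddX j_odd.
have e_ge : 2 ^ h.+2 <= 2 ^ e by rewrite leq_exp2l.
have := rot_exp2_mod_le_or_ge a_lt e_lt; rewrite -j_eq.
by rewrite !expnS in e_ge *; have := expn_gt0 2 h; lia.
Qed.

Hypotheses (i_gt0 : 0 < i) (i_lt : i < 2 ^ (h - 1)).

Lemma cosets_meet_shift_shiftS :
  cosets_meet m (i + 2 ^ h) (j + 2 ^ h.+1) -> i = 1 /\ j = 1.
Proof.
move=> meet; have v_gt := exp2S2_lt_cyc_v; have P_half := exp2_half.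
have a_lt : i + 2 ^ h < cyc_v m by rewrite !expnS in v_gt *; lia.
have b_lt : j + 2 ^ h.+1 < cyc_v m by rewrite !expnS in v_gt *; lia.
have [e e_lt] := cosets_meet_rot m_gt0 b_lt meet.
have [e_le | e_gt] := leqP e h.
  rewrite rot_exp2_mod_small //; last first.
    have : 2 ^ h.+1 <= 2 ^ (m - e) by rewrite leq_exp2l // m_def; lia.
    by rewrite expnS; lia.
  case: e {e_lt e_le} => [|[|e]]; rewrite ?expn0 ?expn1 ?expnS => j_eq.
  - lia.
  - have j_even : j = 2 * i by lia.
    by move: j_odd; rewrite j_even oddM.
  - have := expn_gt0 2 e; nia.
have [e_eq | e_gt1] := eqVneq e h.+1.
  subst e; rewrite rot_exp2_modE // (_ : m - h.+1 = h); last by lia.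
  have i_ltP : i < 2 ^ h by lia.
  rewrite modnDr modn_small // divnDr // divnn expn_gt0 divn_small // expnS.
  have [i_ge2 | i_le1] := leqP 2 i; last by rewrite (_ : i = 1); lia.
  have : 2 * (2 * 2 ^ h) <= i * (2 * 2 ^ h) by rewrite leq_mul2r i_ge2 orbT.
  lia.
have e_ge : 2 ^ h.+2 <= 2 ^ e by rewrite leq_exp2l //; lia.
move=> j_eq; have := rot_exp2_mod_le_or_ge a_lt e_lt; rewrite -j_eq.
by rewrite !expnS in e_ge *; lia.
Qed.

Lemma shift_pair_of_quotient u : 0 < u <= h ->
  2 ^ u %| i + 2 ^ h -> j = (i + 2 ^ h) %/ 2 ^ u -> shift_pair h i j.
Proof.
move=> /andP[u_gt0 u_le] a_dvd j_eq.
have dvd_i : 2 ^ u %| i by rewrite -(dvdn_addl i (dvdn_exp2l 2 u_le)).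
have i_eq : i = 2 ^ u * (i %/ 2 ^ u) by rewrite mulnC divnK.
have u_lt : u < h - 1.
  rewrite -(ltn_exp2l _ _ (isT : 1 < 2)).
  exact: leq_ltn_trans (dvdn_leq i_gt0 dvd_i) i_lt.
rewrite divnDl // -expnB // in j_eq.
exists u, (i %/ 2 ^ u); split=> //; first by lia.
apply/and3P; split.
- have u_lt_h : u < h by lia.
  by move: j_odd; rewrite j_eq oddD oddX subn_eq0 leqNgt u_lt_h /= addbF.
- by rewrite divn_gt0 ?expn_gt0 // dvdn_leq.
- have : 2 ^ u * (i %/ 2 ^ u) < 2 ^ u * 2 ^ (h - 1 - u).
    by rewrite -i_eq -expnD subnKC //; lia.
  by rewrite ltn_pmul2l ?expn_gt0 //; lia.
Qed.

Lemma cosets_meet_shift_pair : cosets_meet m (i + 2 ^ h) j -> shift_pair h i j.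
Proof.
move=> meet; have v_gt := exp2S2_lt_cyc_v; have P_half := exp2_half.
have a_lt : i + 2 ^ h < cyc_v m by rewrite !expnS in v_gt *; lia.
have j_lt_v : j < cyc_v m by rewrite !expnS in v_gt *; lia.
have [e e_lt j_eq] := cosets_meet_rot m_gt0 j_lt_v meet.
have [e_le | e_gt] := leqP e h.
  move: j_eq; rewrite rot_exp2_mod_small //; last first.
    have : 2 ^ h.+1 <= 2 ^ (m - e) by rewrite leq_exp2l // m_def; lia.
    by rewrite expnS; lia.
  have : i + 2 ^ h <= (i + 2 ^ h) * 2 ^ e by rewrite leq_pmulr ?expn_gt0.
  lia.
have [a_dvd | a_ndvd] := boolP (2 ^ (m - e) %| i + 2 ^ h).
  by apply: (shift_pair_of_quotient _ a_dvd); rewrite ?j_eq ?rot_exp2_mod_dvd //; lia.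
have := rot_exp2_mod_ndvd a_lt e_lt a_ndvd; rewrite -j_eq.
have : 2 ^ h.+1 <= 2 ^ e by rewrite leq_exp2l.
by rewrite expnS; lia.
Qed.

End ShiftedCosets.

Theorem lemma10 (m : nat) (Hm5 : 5 <= m) (Hodd : odd m) :
  let h := (m - 1) %/ 2 in
  forall i j : nat, 1 <= i <= 2 ^ (h - 1) - 1 -> Gamma h j ->
  ((cosets_meet m (i + 2 ^ h) (j + 2 ^ h.+1) -> i = 1 /\ j = 1) /\
   cosets_disjoint m j (j + 2 ^ h.+1)) /\
  (let cond := exists s i1 : nat,
       [/\ 1 <= s <= h - 2, Gamma (h - 1 - s) i1,
           i = 2 ^ s * i1 & j = i1 + 2 ^ (h - s)] in
   (cond -> cap_eq_right m (i + 2 ^ h) j) /\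
   (~ cond -> cosets_disjoint m (i + 2 ^ h) j)).
Proof.
move=> h i j /andP[i_gt0 i_le] /and3P[j_odd j_gt0 j_le].
have m_def : m = 2 * h + 1 by rewrite /h; lia.
have h_ge2 : 2 <= h by rewrite /h; lia.
have i_lt : i < 2 ^ (h - 1) by have := expn_gt0 2 (h - 1); lia.
have j_lt : j < 2 ^ h by have := expn_gt0 2 h; lia.
clearbody h; split; [split | split].
- by apply: cosets_meet_shift_shiftS.
- by apply: cosets_disjoint_shiftS.
- by apply: cap_eq_right_shift.
- move=> no_cond x xab; apply: no_cond.
  by apply: cosets_meet_shift_pair; last exact: ex_intro _ x xab.
Qed.
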